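(* Let $q=4$, $B=A$, $|A|=m-1$, and put $\theta=2^{4m+2|C|-3}$. Then $\mathcal C_{\overline{\mathcal N}_2}$ is a projective $3$-weight code over $\mathbb F_4$ with parameters $[\theta,\ 2m+|C|,\ \theta/2]$ whose nonzero Hamming weights are $w_1=\theta/2$, $w_2=3\theta/4$, $w_3=\theta$ with frequencies $6$, $4^{2m+|C|}-16$ and $9$, respectively. In particular $w_1+w_2+w_3=\frac{9}{4}\theta$.
   Context: $\mathbb F_4$ is the field with four elements (so $q=4$), $\mathbb F_4^*=\mathbb F_4\setminus\{0\}$, $m\ge2$, $[m]=\{1,\dots,m\}$, $\mathrm{supp}(v)=\{i:v_i\ne0\}$. For nonempty $P\subseteq[m]$, $\Delta_P=\{v\in\mathbb F_q^m:\mathrm{supp}(v)\subseteq P\}$, $\Delta_P^c=\mathbb F_q^m\setminus\Delta_P$. $A,B,C$ are nonempty subsets of $[m]$. Let $\mathcal N_2=\{(w_2+\omega,w_3,w_1)\in\mathbb F_q^{3m}: w_1\in\Delta_A^c,\ w_2\in\Delta_B,\ w_3\in\Delta_C,\ \omega\in\{\mathbf 0,w_1\}\}$ (closed under multiplication by $\mathbb F_q^*$), let $\overline{\mathcal N}_2$ be a set containing exactly one element of each class $\{\alpha x:\alpha\in\mathbb F_q^*\}$, $x\in\mathcal N_2$, and let $\mathcal C_{\overline{\mathcal N}_2}$ be the linear code over $\mathbb F_q$ spanned by the rows of the $3m\times|\overline{\mathcal N}_2|$ matrix whose columns are the elements of $\overline{\mathcal N}_2$. A code is projective if its dual has minimum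 distance at least $3$. *)

From HB Require Import structures.
From mathcomp Require Import all_boot all_order all_algebra all_field.
Set Implicit Arguments. Unset Strict Implicit. Unset Printing Implicit Defensive.
Import GRing.Theory.
Local Open Scope ring_scope.

Section Defs.
Variable F : finFieldType.

Definition supp (m : nat) (v : 'cV[F]_m) : {set 'I_m} := [set i | v i 0 != 0].

Definition Delta (m : nat) (P : {set 'I_m}) : {set 'cV[F]_m} :=
  [set v | supp v \subset P].

Definition N2 (m : nat) (A B C : {set 'I_m}) : {set 'cV[F]_(m + (m + m))} :=
  [set x | [exists w1 : 'cV[F]_m, exists w2 : 'cV[F]_m, exists w3 : 'cV[F]_m,
     exists om : 'cV[F]_m,
     [&& w1 \notin Delta A, w2 \in Delta B, w3 \in Delta C,
         (om == 0) || (om == w1) & x == col_mx (w2 + om) (col_mx w3 w1)]]].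

(* Nbar contains exactly one element of each class {a x : a in F^*}, x in N *)
Definition proj_reps (n : nat) (N Nbar : {set 'cV[F]_n}) : Prop :=
  Nbar \subset N /\
  forall x, x \in N ->
    #|[set y in Nbar | [exists a : F, (a != 0) && (y == a *: x)]]| = 1%N.

Definition colmx (n : nat) (S : {set 'cV[F]_n}) : 'M[F]_(n, #|S|) :=
  \matrix_(i, j) (enum_val j : 'cV[F]_n) i 0.

Definition code (n k : nat) (G : 'M[F]_(n, k)) : {set 'rV[F]_k} :=
  [set u *m G | u : 'rV[F]_n].

Definition wt (k : nat) (c : 'rV[F]_k) : nat := #|[set j | c 0 j != 0]|.

Definition dual_code (k : nat) (Cd : {set 'rV[F]_k}) : {set 'rV[F]_k} :=
  [set v | [forall c in Cd, c *m v^T == 0]].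

Definition projective (k : nat) (Cd : {set 'rV[F]_k}) : Prop :=
  forall v, v \in dual_code Cd -> v != 0 -> (3 <= wt v)%N.

End Defs.

From HB Require Import structures.
From mathcomp Require Import all_boot all_order all_algebra all_field.
From mathcomp Require Import zify.
Set Implicit Arguments. Unset Strict Implicit. Unset Printing Implicit Defensive.
Import GRing.Theory.
Local Open Scope ring_scope.

(* With [B = A] the complement of a single index [j], [N2] is the set [S] of
   vectors vanishing on the [w3]-coordinates outside [C], with [x_w := w1_j]
   nonzero and [x_y := (w2 + om)_j] equal to [0] or [x_w]; the remaining
   [2m + |C| - 2] coordinates are free.  Codewords correspond bijectively to the
   rows [u] vanishing on the coordinates forced to zero, which gives the
   dimension [2m + |C|].  Since [Nbar] meets every projective
   class of [S] once, a codeword [u G] has [(q - 1) wt (u G) = #{x in S | u x != 0}].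
   If [u] is nonzero on a free coordinate, [u x] is equidistributed over [S],
   so the weight is [|S| / q = 3 theta / 4].  Otherwise [u x] is [b x_w] on the
   half of [S] with [x_y = 0] and [s x_w] on the half with [x_y = x_w], so the
   weight is [theta / 2] or [theta] according as one or both of [s], [b] are
   nonzero; counting pairs [(s, b)] gives the frequencies [6] and [9].  The
   columns are nonzero and pairwise non-proportional, so the code is projective. *)

Lemma expn2_odd k : (2 ^ k.*2.+1 = 2 * 4 ^ k)%N.
Proof. by rewrite expnS -mul2n expnM. Qed.

Lemma double_pow4_divn k : (0 < k)%N ->
  let X := (4 ^ k)%N in
  [/\ (2 * X) %/ 2 = X, 2 * (3 * (2 * X) %/ 4) = 3 * X
    & X + 3 * (2 * X) %/ 4 + 2 * X = 9 * (2 * X) %/ 4]%N.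
Proof.
move=> k_gt0 X; have -> : X = (4 * 4 ^ k.-1)%N by rewrite -expnS prednK.
set p := (4 ^ k.-1)%N.
have e3 : (3 * (2 * (4 * p)) = 6 * p * 4)%N by lia.
have e9 : (9 * (2 * (4 * p)) = 18 * p * 4)%N by lia.
have e2 : (2 * (4 * p) = 4 * p * 2)%N by lia.
by rewrite e3 e9 e2 !mulnK //; split; lia.
Qed.

Lemma card_in_const (T : finType) (A : {set T}) (P : pred T) (b : bool) :
  {in A, forall x, P x = b} -> #|[set x in A | P x]| = (b * #|A|)%N.
Proof.
case: b => PA; rewrite ?mul1n ?mul0n; [apply: eq_card | apply: eq_card0] => x;
  by rewrite inE; case: (boolP (x \in A)) => // /PA ->.
Qed.

Section Pairs.
Variable F : finFieldType.

Lemma card_pairs_nz1 :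
  #|[set p : F * F | ((p.1 != 0%R) + (p.2 != 0%R) == 1)%N]| = (2 * #|F|.-1)%N.
Proof.
have -> : [set p : F * F | ((p.1 != 0%R) + (p.2 != 0%R) == 1)%N] =
    setX [set~ 0] [set 0] :|: setX [set 0] [set~ 0].
  by apply/setP => -[s b]; rewrite !inE /=; case: (s == 0); case: (b == 0).
rewrite cardsU !cardsX !cardsC1 !cards1 (_ : _ :&: _ = set0) ?cards0.
  by rewrite muln1 mul1n subn0 mul2n addnn.
by apply/setP => -[s b]; rewrite !inE /=; case: (s == 0); rewrite ?andbF.
Qed.

Lemma card_pairs_nz2 :
  #|[set p : F * F | ((p.1 != 0%R) + (p.2 != 0%R) == 2)%N]| = (#|F|.-1 * #|F|.-1)%N.
Proof.
have -> : [set p : F * F | ((p.1 != 0%R) + (p.2 != 0%R) == 2)%N] = setX [set~ 0] [set~ 0].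
  by apply/setP => -[s b]; rewrite !inE /=; case: (s == 0); case: (b == 0).
by rewrite cardsX !cardsC1.
Qed.

End Pairs.

Section Coordinates.
Variables (F : finFieldType) (n : nat).
Implicit Types (x : 'cV[F]_n) (u : 'rV[F]_n) (P : {set 'I_n}).

Definition dotmx u x : F := (u *m x) 0 0.

Lemma DeltaP P x : reflect (forall i, i \notin P -> x i 0 = 0) (x \in Delta F P).
Proof.
rewrite inE; apply: (iffP subsetP) => [sP i | x0 i].
  by apply: contraNeq => xi; apply: sP; rewrite inE.
by rewrite inE; apply: contraR => /x0 ->.
Qed.

Lemma in_Delta_setC1 i x : (x \in Delta F (~: [set i])) = (x i 0 == 0).
Proof.
apply/DeltaP/eqP => [-> // | xi k]; first by rewrite !inE eqxx.
by rewrite !inE negbK => /eqP ->.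
Qed.

Lemma card_Delta P : #|Delta F P| = (#|F| ^ #|P|)%N.
Proof.
rewrite -(card_pffun_on 0 P F).
rewrite -(card_imset _ (f := fun x : 'cV[F]_n => [ffun k => x k 0])); last first.
  by move=> x y /ffunP e; apply/matrixP => i k; rewrite ord1; have := e i; rewrite !ffunE.
apply: eq_card => f; apply/imsetP/pffun_onP => [[x /DeltaP x0 ->] | [sP _]].
  split=> //; apply/subsetP => k; rewrite !inE ffunE; apply: contraR => /x0 ->.
  by rewrite eqxx.
exists (\col_k f k); last by apply/ffunP => k; rewrite !ffunE mxE.
apply/DeltaP => k kP; rewrite mxE; apply/eqP; apply: contraR kP => fk.
by apply: (subsetP sP); rewrite inE.
Qed.

Lemma in_Delta_setU1 i P x : i \notin P -> x \in Delta F (i |: P) ->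
  (x \in Delta F P) = (x i 0 == 0).
Proof.
move=> iP /DeltaP x0; apply/DeltaP/eqP => [xP | xi k kP]; first exact: xP.
by case: (k =P i) => [-> // | ki]; apply: x0; rewrite !inE negb_or kP andbT; apply/eqP.
Qed.

Lemma Delta_subset P P' : P \subset P' -> Delta F P \subset Delta F P'.
Proof.
move=> sPP'; apply/subsetP => x /DeltaP x0; apply/DeltaP => k kP'; apply: x0.
by apply: contra kP'; apply: (subsetP sPP').
Qed.

Lemma DeltaB P x x' : x \in Delta F P -> x' \in Delta F P -> x - x' \in Delta F P.
Proof.
move=> /DeltaP x0 /DeltaP x'0; apply/DeltaP => k kP.
by rewrite !mxE x0 ?x'0 ?subrr.
Qed.

Lemma translate_eq x s k : (x + s *: delta_mx k 0) k 0 = x k 0 + s.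
Proof. by rewrite !mxE !eqxx mulr1. Qed.

Lemma translate_neq x s k k' : k' != k -> (x + s *: delta_mx k 0) k' 0 = x k' 0.
Proof. by move=> /negbTE k'k; rewrite !mxE k'k mulr0 addr0. Qed.

Lemma Delta_translate P x s k : k \in P ->
  (x + s *: delta_mx k 0 \in Delta F P) = (x \in Delta F P).
Proof.
move=> kP; apply/DeltaP/DeltaP => x0 k' k'P; have k'k : k' != k by apply: contraNneq k'P => ->.
  by rewrite -(translate_neq x s k'k) x0.
by rewrite translate_neq // x0.
Qed.

Lemma mulmx_delta_col u k : (u *m (delta_mx k 0 : 'cV_n)) 0 0 = u 0 k.
Proof. by rewrite -colE mxE. Qed.

Lemma mulmx_delta_row x k : ((delta_mx 0 k : 'rV_n) *m x) 0 0 = x k 0.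
Proof. by rewrite -rowE mxE. Qed.

Lemma dotmx_translate u x s k :
  dotmx u (x + s *: delta_mx k 0) = dotmx u x + s * u 0 k.
Proof. by rewrite /dotmx mulmxDr -scalemxAr -mulmx_delta_col !mxE. Qed.

Lemma dotmxZ u x a : dotmx u (a *: x) = a * dotmx u x.
Proof. by rewrite /dotmx -scalemxAr mxE. Qed.

(* The fibres of [x |-> u x] over [S] are translates of one another along [k]. *)
Lemma card_nonorthogonal (S : {set 'cV[F]_n}) u k :
  (forall x s, x \in S -> x + s *: delta_mx k 0 \in S) -> u 0 k != 0 ->
  (#|F| * #|[set x in S | dotmx u x != 0%R]| = #|F|.-1 * #|S|)%N.
Proof.
move=> S_tr uk.
set S0 := [set x in S | dotmx u x == 0].
pose tr (p : F * 'cV[F]_n) := p.2 + (p.1 / u 0 k) *: delta_mx k 0.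
have trE p : dotmx u (tr p) = dotmx u p.2 + p.1 by rewrite dotmx_translate divfK.
have img : [set x in S | dotmx u x != 0] = tr @: setX [set~ 0] S0.
  apply/setP => x; rewrite inE; apply/andP/imsetP => [[xS ux] | [[t y] ]].
    exists (dotmx u x, x + - (dotmx u x / u 0 k) *: delta_mx k 0).
      by rewrite !inE ux S_tr //= dotmx_translate mulNr divfK // subrr eqxx.
    by rewrite /tr /= scaleNr addrNK.
  rewrite !inE /= => /and3P [t0 yS /eqP uy] ->.
  by rewrite trE uy add0r S_tr.
have card_img : #|[set x in S | dotmx u x != 0]| = (#|F|.-1 * #|S0|)%N.
  rewrite img card_in_imset ?cardsX ?cardsC1 // => -[t y] [t' y'].
  rewrite !inE /= => /and3P [_ _ /eqP uy] /and3P [_ _ /eqP uy'] e.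
  have et : t = t' by have := congr1 (fun z => dotmx u z) e; rewrite /= !trE uy uy' !add0r.
  by move: e; rewrite /tr et /= => /addIr ->.
have split_S : #|S| = (#|S0| + #|[set x in S | dotmx u x != 0%R]|)%N.
  rewrite -(cardsID [set x | dotmx u x == 0] S); congr addn; apply: eq_card => x.
    by rewrite !inE.
  by rewrite !inE andbC.
have : (0 < #|F|)%N by apply/card_gt0P; exists 0.
rewrite split_S card_img; lia.
Qed.

Lemma wt_mul_colmx (N : {set 'cV[F]_n}) u :
  wt (u *m colmx N) = #|[set y in N | dotmx u y != 0]|.
Proof.
rewrite /wt -(card_imset _ (@enum_val_inj _ (mem N))); apply: eq_card => y.
rewrite [RHS]inE /dotmx mxE; apply/imsetP/andP => [[jj] | [yN uy]].
  rewrite inE mxE; under eq_bigr do rewrite mxE.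
  by move=> uy ->; split=> //; apply: (@enum_valP _ (mem N)).
exists (enum_rank_in yN y); last by rewrite enum_rankK_in.
by rewrite inE mxE; under eq_bigr do rewrite mxE; rewrite enum_rankK_in.
Qed.

End Coordinates.

Lemma wt_eq0 (F : finFieldType) k (c : 'rV[F]_k) : (wt c == 0%N) = (c == 0).
Proof.
rewrite /wt cards_eq0; apply/eqP/eqP => [c0 | ->].
  apply/matrixP => i jj; rewrite ord1 mxE; apply/eqP.
  by move/setP: c0 => /(_ jj); rewrite !inE => /negbFE.
by apply/setP => jj; rewrite !inE mxE eqxx.
Qed.

Lemma card_code (F : finFieldType) r k (M : 'M[F]_(r, k)) : #|code M| = (#|F| ^ \rank M)%N.
Proof.
have -> : code M = [set v *m row_base M | v : 'rV[F]_(\rank M)].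
  apply/setP => c; apply/imsetP/imsetP => [[u _ ->] | [v _ ->]].
    by exists (u *m col_base M); rewrite // -mulmxA mulmx_base.
  have : (v *m row_base M <= M)%MS by rewrite -(eq_row_base M) submxMl.
  by case/submxP => D ->; exists D.
by rewrite card_imset ?card_mx ?mul1n //; apply: row_free_inj; apply: row_base_free.
Qed.

Lemma dual_code_mul (F : finFieldType) r k (M : 'M[F]_(r, k)) v :
  v \in dual_code (code M) -> M *m v^T = 0.
Proof.
rewrite inE => /forall_inP dv; apply/row_matrixP => i; rewrite row0 rowE mulmxA.
by apply/eqP/dv; apply/imsetP; exists (delta_mx 0 i).
Qed.

(** * Projective systems *)

Section ProjectiveSystem.
Variables (F : finFieldType) (n : nat) (S Nbar : {set 'cV[F]_n}).
Hypotheses (reps : proj_reps S Nbar) (S_neq0 : 0 \notin S).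
Local Notation G := (colmx Nbar).

Lemma reps_sub : {subset Nbar <= S}.
Proof. exact/subsetP/reps.1. Qed.

Lemma reps_neq0 y : y \in Nbar -> y != 0.
Proof. by move/reps_sub; apply: contraTneq => ->. Qed.

Lemma reps_eq y y' b : y \in Nbar -> y' \in Nbar -> b != 0 -> y' = b *: y -> y' = y.
Proof.
move=> yN y'N b0 ey'; have /eqP/cards1P [z Ez] := reps.2 y (reps_sub yN).
have class_z w a : w \in Nbar -> a != 0 -> w = a *: y -> w = z.
  move=> wN a0 ew; apply/set1P; rewrite -Ez inE wN.
  by apply/existsP; exists a; rewrite a0 ew eqxx.
by rewrite (class_z y' b) // (class_z y 1) ?oner_neq0 ?scale1r.
Qed.

Lemma reps_exists x : x \in S -> exists2 b, b != 0 & b *: x \in Nbar.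
Proof.
move=> xS; have /eqP/cards1P [z Ez] := reps.2 x xS.
have : z \in [set z] by rewrite inE.
by rewrite -Ez inE => /andP [zN /existsP [b /andP [b0 /eqP ez]]]; exists b; rewrite -?ez.
Qed.

(* A dual codeword of weight at most 2 would be a linear relation between at
   most two columns of [G], which are nonzero and pairwise non-proportional. *)
Lemma projective_reps : projective (code G).
Proof.
move=> v /dual_code_mul Gv v0; rewrite leqNgt; apply/negP => wt_v.
have colN (jj : 'I_#|Nbar|) : (enum_val jj : 'cV_n) \in Nbar := enum_valP jj.
set Sv := [set jj | v 0 jj != 0].
have rel : \sum_(jj in Sv) v 0 jj *: (enum_val jj : 'cV_n) = 0.
  apply/matrixP => k i; rewrite ord1 summxE.
  transitivity (\sum_jj G k jj * v^T jj 0); last first.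
    by have := congr1 (fun M : 'cV_n => M k 0) Gv; rewrite !mxE.
  rewrite big_mkcond /=; apply: eq_bigr => jj _.
  by rewrite inE !mxE mulrC; case: eqP => [-> | _]; rewrite ?mulr0.
have Sv0 : #|Sv| != 0%N by rewrite -[#|Sv|]/(wt v) wt_eq0.
have [Sv1 | Sv2] : #|Sv| = 1%N \/ #|Sv| = 2%N by move: wt_v Sv0; rewrite /wt -/Sv; lia.
  move/eqP/cards1P: Sv1 => [j1 Ej]; move: rel; rewrite Ej big_set1 => /eqP.
  have : j1 \in Sv by rewrite Ej inE.
  by rewrite inE scaler_eq0 => /negbTE ->; rewrite (negbTE (reps_neq0 (colN j1))).
move/eqP/cards2P: Sv2 => [j1 [j2 [j12 Ej]]].
have /[!inE] v1 : j1 \in Sv by rewrite Ej !inE eqxx.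
have /[!inE] v2 : j2 \in Sv by rewrite Ej !inE eqxx orbT.
move: rel; rewrite Ej big_setU1 ?inE //= big_set1 => /eqP; rewrite addr_eq0 => /eqP e.
have e2 : enum_val j2 = (- (v 0 j2)^-1 * v 0 j1) *: (enum_val j1 : 'cV_n).
  by rewrite mulNr scaleNr -scalerA e scalerN opprK scalerA mulVf ?scale1r.
have /enum_val_inj e21 : enum_val j2 = enum_val j1 :> 'cV_n.
  by apply: reps_eq e2; rewrite ?colN // mulNr oppr_eq0 mulf_neq0 ?invr_eq0.
by move: j12; rewrite e21 eqxx.
Qed.

Hypothesis S_scale : forall a x, a != 0 -> x \in S -> a *: x \in S.

Lemma card_reps (Q : pred 'cV[F]_n) : (forall a x, a != 0 -> Q (a *: x) = Q x) ->
  #|[set x in S | Q x]| = (#|F|.-1 * #|[set y in Nbar | Q y]|)%N.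
Proof.
move=> QZ; pose sc (p : F * 'cV[F]_n) := p.1 *: p.2.
have -> : [set x in S | Q x] = sc @: setX [set~ 0] [set y in Nbar | Q y].
  apply/setP => x; rewrite inE; apply/andP/imsetP => [[xS Qx] | [[a y]]].
    have [b b0 bx] := reps_exists xS.
    exists (b^-1, b *: x); first by rewrite !inE invr_eq0 b0 bx QZ.
    by rewrite /sc /= scalerA mulVf // scale1r.
  by rewrite !inE /= => /and3P [a0 yN Qy] ->; rewrite S_scale ?reps_sub ?QZ.
rewrite card_in_imset ?cardsX ?cardsC1 // => -[a y] [a' y'].
rewrite !inE /= => /and3P [a0 yN _] /and3P [a'0 y'N _] e.
have ey : y' = y.
  apply: (reps_eq yN y'N (b := a'^-1 * a)); first by rewrite mulf_neq0 ?invr_eq0.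
  by rewrite -scalerA -[a *: y]/(sc (a, y)) e scalerA mulVf ?scale1r.
move: e; rewrite /sc ey /= => /eqP; rewrite -subr_eq0 -scalerBl scaler_eq0 subr_eq0.
by rewrite (negbTE (reps_neq0 yN)) orbF => /eqP ->.
Qed.

Lemma card_reps_wt u :
  #|[set x in S | dotmx u x != 0]| = (#|F|.-1 * wt (u *m G))%N.
Proof. by rewrite wt_mul_colmx card_reps // => a x a0; rewrite dotmxZ mulf_eq0 negb_or a0. Qed.

End ProjectiveSystem.

(** * The set [N2] for [B = A = ~: [set j]] *)

Section ThreeWeightSystem.
Variables (F : finFieldType) (m : nat) (C : {set 'I_m}) (j : 'I_m).
Local Notation n := (m + (m + m))%N.
Local Notation q := #|F|.
Implicit Types (x : 'cV[F]_n) (u : 'rV[F]_n).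

Definition iy (i : 'I_m) : 'I_n := lshift (m + m) i.
Definition iz (i : 'I_m) : 'I_n := rshift m (lshift m i).
Definition iw (i : 'I_m) : 'I_n := rshift m (rshift m i).

(* A vector [(w2 + om, w3, w1)] of [N2] is indexed through [iy], [iz], [iw].
   [Z] collects the [w3]-coordinates outside [C], which vanish; [iy j] and
   [iw j] carry the only other constraints; the coordinates in [Fr] are free. *)
Definition Z : {set 'I_n} := iz @: ~: C.
Definition Fr : {set 'I_n} := ~: (iy j |: (iw j |: Z)).

Definition S : {set 'cV[F]_n} :=
  [set x in Delta F (~: Z) |
     (x (iw j) 0 != 0) && ((x (iy j) 0 == 0) || (x (iy j) 0 == x (iw j) 0))].

Lemma inS x : (x \in S) = [&& x \in Delta F (~: Z), x (iw j) 0 != 0 &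
  (x (iy j) 0 == 0) || (x (iy j) 0 == x (iw j) 0)].
Proof. by rewrite !inE. Qed.

Lemma eq_iy_iw : (iy j == iw j) = false.
Proof. by rewrite eq_lrshift. Qed.

Lemma iy_notin_Z : iy j \notin Z.
Proof. by apply/imsetP => -[i _ /eqP]; rewrite eq_sym eq_rlshift. Qed.

Lemma iw_notin_Z : iw j \notin Z.
Proof. by apply/imsetP => -[i _ /eqP]; rewrite eq_rshift eq_rlshift. Qed.

Lemma notin_Fr k : (k \notin Fr) = [|| k == iy j, k == iw j | k \in Z].
Proof. by rewrite !inE negbK. Qed.

Lemma iy_notin_Fr : iy j \notin Fr. Proof. by rewrite notin_Fr eqxx. Qed.
Lemma iw_notin_Fr : iw j \notin Fr. Proof. by rewrite notin_Fr eqxx orbT. Qed.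

Lemma Z_notin_Fr k : k \in Z -> k \notin Fr.
Proof. by rewrite notin_Fr => ->; rewrite !orbT. Qed.

Lemma card_setC_Z : #|~: Z| = (2 * m + #|C|)%N.
Proof.
have := max_card C; rewrite card_ord => leCm.
rewrite cardsCs setCK card_ord card_imset; last by move=> i i' /rshift_inj /lshift_inj.
by rewrite [#|~: C|]cardsCs setCK card_ord; lia.
Qed.

Lemma card_Fr : #|Fr| = (2 * m + #|C| - 2)%N.
Proof.
have /andP [yZ wZ] : (iy j \notin iw j |: Z) && (iw j \notin Z).
  by rewrite in_setU1 eq_iy_iw iy_notin_Z iw_notin_Z.
have := card_setC_Z; rewrite [#|~: Z|]cardsCs setCK card_ord.
by rewrite [#|Fr|]cardsCs setCK card_ord !cardsU1 yZ wZ; lia.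
Qed.

Lemma N2_eq : N2 F (~: [set j]) (~: [set j]) C = S.
Proof.
apply/setP => x; rewrite inS in_set; apply/existsP/and3P.
- case=> w1 /existsP [w2 /existsP [w3 /existsP [om]]].
  rewrite !in_Delta_setC1 => /and5P [w1j /eqP w2j /DeltaP w3C om01 /eqP ->].
  rewrite /iy /iw !(col_mxEu, col_mxEd) !mxE w2j add0r w1j; split=> //.
    apply/DeltaP => _ /[!inE] /negbNE /imsetP [i /[!inE] iC ->].
    by rewrite /iz col_mxEd col_mxEu w3C.
  by case/orP: om01 => /eqP ->; rewrite ?mxE eqxx ?orbT.
- case=> /DeltaP xZ xw xy.
  pose om := if x (iy j) 0 == 0 then 0 else dsubmx (dsubmx x).
  exists (dsubmx (dsubmx x)); apply/existsP; exists (usubmx x - om).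
  apply/existsP; exists (usubmx (dsubmx x)); apply/existsP; exists om.
  rewrite !in_Delta_setC1 !mxE xw /=; apply/and4P; split.
  + rewrite /om; case: ifP => [/eqP y0 | y0]; rewrite !mxE ?subr0 -/(iy j) ?y0 //.
    by rewrite y0 /= in xy; rewrite (eqP xy) subrr.
  + apply/DeltaP => i iC; rewrite !mxE; apply: xZ.
    by rewrite inE negbK -[rshift _ _]/(iz i) imset_f // inE.
  + by rewrite /om; case: ifP; rewrite eqxx ?orbT.
  + by rewrite subrK !vsubmxK.
Qed.

Lemma S_ext x x' : (forall k, k \notin Fr -> x' k 0 = x k 0) -> (x' \in S) = (x \in S).
Proof.
move=> xx'; rewrite !inS !xx' ?iy_notin_Fr ?iw_notin_Fr //; congr andb.
have Zxx' k : k \notin ~: Z -> x' k 0 = x k 0 by rewrite inE negbK => /Z_notin_Fr /xx'.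
by apply/DeltaP/DeltaP => x0 k kZ; [rewrite -Zxx' | rewrite Zxx'] => //; apply: x0.
Qed.

Lemma S_translate x s k : x \in S -> k \in Fr -> x + s *: delta_mx k 0 \in S.
Proof.
move=> xS kFr; rewrite (S_ext (x := x)) // => k' k'Fr; apply: translate_neq.
by apply: contraNneq k'Fr => ->.
Qed.

Lemma S_scale a x : a != 0 -> x \in S -> a *: x \in S.
Proof.
move=> a0; rewrite !inS !mxE mulf_eq0 negb_or a0 => /and3P [/DeltaP xZ -> xy] /=.
apply/andP; split; first by apply/DeltaP => k /xZ; rewrite mxE => ->; rewrite mulr0.
by case/orP: xy => /eqP ->; rewrite ?mulr0 eqxx ?orbT.
Qed.

Lemma S_w x : x \in S -> x (iw j) 0 != 0.
Proof. by rewrite inS => /and3P []. Qed.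

Lemma S_Z x k : x \in S -> k \in Z -> x k 0 = 0.
Proof. by rewrite inS => /and3P [/DeltaP xZ _ _] kZ; apply: xZ; rewrite inE negbK. Qed.

Lemma S_neq0 : 0 \notin S.
Proof. by rewrite inS mxE eqxx andbF. Qed.

Lemma Delta_iw_FrE x :
  (x \in Delta F (iw j |: Fr)) = (x \in Delta F (~: Z)) && (x (iy j) 0 == 0).
Proof.
apply/DeltaP/andP => [x0 | [/DeltaP xZ /eqP xy] k].
  split; last by apply/eqP/x0; rewrite in_setU1 eq_iy_iw iy_notin_Fr.
  apply/DeltaP => k; rewrite inE negbK => kZ; apply: x0.
  by rewrite in_setU1 negb_or Z_notin_Fr // andbT; apply: contraNneq iw_notin_Z => <-.
rewrite in_setU1 negb_or notin_Fr => /andP [kw]; rewrite (negbTE kw) /=.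
by case/orP => [/eqP -> // | kZ]; apply: xZ; rewrite inE negbK.
Qed.

Definition S0 := [set x in S | x (iy j) 0 == 0].
Definition S1 := [set x in S | x (iy j) 0 != 0].

Lemma S0E : S0 = Delta F (iw j |: Fr) :\: Delta F Fr.
Proof.
apply/setP => x; rewrite in_setD [x \in S0]inE inS.
case: (boolP (x \in Delta F (iw j |: Fr))) => xD; last first.
  rewrite andbF; apply/negbTE; move: xD; rewrite Delta_iw_FrE.
  by apply: contra => /andP [/and3P [-> _ _] ->].
rewrite (in_Delta_setU1 iw_notin_Fr xD); move: xD; rewrite Delta_iw_FrE => /andP [-> ->].
by rewrite andbT.
Qed.

Lemma card_S0 : #|S0| = (q.-1 * q ^ #|Fr|)%N.
Proof.
have sFr : Delta F Fr \subset Delta F (iw j |: Fr) by apply/Delta_subset/subsetUr.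
rewrite S0E cardsD (setIidPr sFr) !card_Delta cardsU1 iw_notin_Fr add1n expnS.
by rewrite -{2}[(q ^ _)%N]mul1n -mulnBl subn1.
Qed.

Definition shift_y x := x + x (iw j) 0 *: delta_mx (iy j) 0.

Lemma S1E : S1 = shift_y @: S0.
Proof.
have wy : iw j != iy j by rewrite eq_sym eq_iy_iw.
have yZ : iy j \in ~: Z by rewrite inE iy_notin_Z.
apply/setP => x; apply/idP/imsetP => [| [x' x'S0 ->]].
  rewrite [x \in S1]inE inS => /andP [/and3P [xZ xw xy] /negbTE y0]; rewrite y0 /= in xy.
  exists (x - x (iw j) 0 *: delta_mx (iy j) 0); last first.
    by rewrite /shift_y -scaleNr translate_neq // scaleNr subrK.
  rewrite in_set inS -scaleNr Delta_translate // translate_neq // translate_eq.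
  by rewrite xZ xw (eqP xy) addrN eqxx.
move: x'S0; rewrite [_ \in S0]inE inS [_ \in S1]inE inS => /andP [/and3P [x'Z x'w _] /eqP x'y].
by rewrite /shift_y Delta_translate // translate_neq // translate_eq x'y add0r x'Z x'w eqxx orbT.
Qed.

Lemma card_S1 : #|S1| = #|S0|.
Proof.
rewrite S1E card_in_imset // => x x' _ _ e.
have wy : iw j != iy j by rewrite eq_sym eq_iy_iw.
have := congr1 (fun z : 'cV_n => z (iw j) 0) e; rewrite /= !translate_neq // => ew.
by move: e; rewrite /shift_y ew => /addIr.
Qed.

Lemma card_S_split (P : pred 'cV[F]_n) :
  #|[set x in S | P x]| = (#|[set x in S0 | P x]| + #|[set x in S1 | P x]|)%N.
Proof.
rewrite -(cardsID [set x : 'cV_n | x (iy j) 0 == 0]); congr addn; apply: eq_card => x.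
  by rewrite !inE andbAC.
by rewrite !inE andbCA !andbA.
Qed.

Lemma card_S : #|S| = (2 * q.-1 * q ^ #|Fr|)%N.
Proof.
have := card_S_split predT; rewrite !setIdE !setIT card_S1 card_S0; lia.
Qed.

Lemma in_S1 x : x \in S1 -> x (iy j) 0 = x (iw j) 0.
Proof. by rewrite inE inS => /andP [/and3P [_ _] /orP [/eqP -> | /eqP] //]; rewrite eqxx. Qed.

(* The rows vanishing outside [{iy j, iw j}], parametrised so that the form
   [x |-> phi s b x] is [b * x_w] on [S0] and [s * x_w] on [S1]. *)
Definition phi (s b : F) : 'rV[F]_n :=
  (s - b) *: delta_mx 0 (iy j) + b *: delta_mx 0 (iw j).

Lemma dotmx_phi s b x : dotmx (phi s b) x = (s - b) * x (iy j) 0 + b * x (iw j) 0.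
Proof.
by rewrite -(mulmx_delta_row x (iy j)) -(mulmx_delta_row x (iw j)) /dotmx mulmxDl -!scalemxAl !mxE.
Qed.

Lemma phi_entry s b k :
  phi s b 0 k = (if k == iy j then s - b else 0) + (if k == iw j then b else 0).
Proof. by rewrite !mxE eqxx /=; case: (k == iy j); case: (k == iw j); rewrite ?mulr1 ?mulr0. Qed.

Lemma phi_inj : injective (fun p : F * F => phi p.1 p.2).
Proof.
move=> [s b] [s' b'] /= e.
have := congr1 (fun v : 'rV_n => v 0 (iw j)) e.
rewrite /= !phi_entry eq_sym eq_iy_iw eqxx !add0r => eb.
have := congr1 (fun v : 'rV_n => v 0 (iy j)) e; rewrite /= !phi_entry eq_iy_iw eqxx !addr0 eb.
by move/subIr => ->.
Qed.

Definition U : {set 'rV[F]_n} := [set u | u^T \in Delta F (~: Z)].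

Lemma inU u : (u \in U) = (u^T \in Delta F (~: Z)).
Proof. by rewrite !inE. Qed.

Lemma card_U : #|U| = (q ^ (2 * m + #|C|))%N.
Proof.
have -> : U = trmx @: Delta F (~: Z).
  apply/setP => u; rewrite inU; apply/idP/imsetP => [uD | [x xD ->]]; last by rewrite trmxK.
  by exists u^T; rewrite ?trmxK.
by rewrite card_imset ?card_Delta ?card_setC_Z //; apply: (@trmx_inj _ n 1).
Qed.

Lemma phi_U s b : phi s b \in U.
Proof.
rewrite inE; apply/DeltaP => k; rewrite inE negbK mxE phi_entry => kZ.
by rewrite !ifN ?addr0 //; apply: contraTneq kZ => ->; rewrite ?iy_notin_Z ?iw_notin_Z.
Qed.

Lemma U_cases u : u \in U ->
  (exists2 k, k \in Fr & u 0 k != 0) \/ u = phi (u 0 (iy j) + u 0 (iw j)) (u 0 (iw j)).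
Proof.
rewrite inE => /DeltaP uZ.
case: (boolP [exists k in Fr, u 0 k != 0]) => [/exists_inP [k kFr uk] | uFr].
  by left; exists k.
right; move: uFr; rewrite negb_exists_in => /forall_inP uFr.
apply/rowP => k; rewrite phi_entry addrK.
case: (k =P iy j) => [-> | /eqP ky]; first by rewrite eq_iy_iw addr0.
case: (k =P iw j) => [-> | /eqP kw]; first by rewrite add0r.
rewrite addr0; case: (boolP (k \in Fr)) => [/uFr /negbNE /eqP // | ].
rewrite notin_Fr (negbTE ky) (negbTE kw) /= => kZ.
by have := uZ k; rewrite inE negbK mxE => ->.
Qed.

Lemma phi_eq0 s b : (phi s b == 0) = (s == 0) && (b == 0).
Proof.
apply/eqP/andP => [e | [/eqP -> /eqP ->]]; last by rewrite /phi subrr !scale0r addr0.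
have : phi s b = phi 0 0 by rewrite e /phi subrr !scale0r addr0.
by move/(@phi_inj (s, b) (0, 0)) => [-> ->].
Qed.

Lemma q1_gt0 : (0 < q.-1)%N.
Proof. by rewrite -subn1 subn_gt0 card_finNzRing_gt1. Qed.

(** * Weights of the code *)

Section Code.
Variable Nbar : {set 'cV[F]_n}.
Hypothesis reps : proj_reps S Nbar.
Local Notation G := (colmx Nbar).

Lemma card_S_wt u : #|[set x in S | dotmx u x != 0]| = (q.-1 * wt (u *m G))%N.
Proof. exact: card_reps_wt reps S_neq0 S_scale u. Qed.

Lemma card_Nbar : #|Nbar| = (2 * q ^ #|Fr|)%N.
Proof.
have := card_reps reps S_neq0 S_scale (Q := predT) (fun _ _ _ => erefl).
rewrite !setIdE !setIT card_S => e; apply/eqP.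
by rewrite -(eqn_pmul2l q1_gt0) -e mulnCA mulnA.
Qed.

Lemma wt_generic u k : k \in Fr -> u 0 k != 0 ->
  (q * wt (u *m G) = 2 * q.-1 * q ^ #|Fr|)%N.
Proof.
move=> kFr uk; have := card_nonorthogonal (fun x s xS => S_translate s xS kFr) uk.
rewrite card_S_wt card_S mulnCA => e; apply/eqP.
by rewrite -(eqn_pmul2l q1_gt0) e mulnCA !mulnA.
Qed.

Lemma wt_phi s b : wt (phi s b *m G) = (((b != 0%R) + (s != 0%R)) * q ^ #|Fr|)%N.
Proof.
have on_S0 : {in S0, forall x, (dotmx (phi s b) x != 0) = (b != 0)}.
  move=> x; rewrite [x \in S0]inE => /andP [/S_w xw /eqP x0].
  by rewrite dotmx_phi x0 mulr0 add0r mulf_eq0 negb_or andbC xw.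
have on_S1 : {in S1, forall x, (dotmx (phi s b) x != 0) = (s != 0)}.
  move=> x x1; rewrite dotmx_phi (in_S1 x1) -mulrDl subrK mulf_eq0 negb_or andbC.
  by move: x1; rewrite [x \in S1]inE => /andP [/S_w -> _].
apply/eqP; rewrite -(eqn_pmul2l q1_gt0) -card_S_wt card_S_split.
by rewrite (card_in_const on_S0) (card_in_const on_S1) card_S1 card_S0 -mulnDl mulnCA.
Qed.

Lemma code_G : code G = (mulmx^~ G) @: U.
Proof.
apply/setP => c; apply/imsetP/imsetP => [[u _ ->] | [u _ ->]]; last by exists u.
exists (\row_k (if k \in Z then 0 else u 0 k)).
  by rewrite inE; apply/DeltaP => k; rewrite inE negbK !mxE => ->.
apply/matrixP => i jj; rewrite ord1 !mxE; apply: eq_bigr => k _; rewrite !mxE.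
have jjS : enum_val jj \in S := reps_sub reps (enum_valP jj).
by case: ifP => // kZ; rewrite S_Z ?mulr0.
Qed.

Lemma mulG_eq0 u : u \in U -> (u *m G == 0) = (u == 0).
Proof.
move=> uU; rewrite -[_ *m G == 0]wt_eq0.
have qX_gt0 : (0 < q ^ #|Fr|)%N by rewrite expn_gt0 ltnW ?card_finNzRing_gt1.
case: (U_cases uU) => [[k kFr uk] | ->].
  have u_neq0 : u != 0 by apply: contraNneq uk => ->; rewrite mxE.
  have := wt_generic kFr uk; have := q1_gt0; rewrite (negbTE u_neq0); nia.
rewrite wt_phi phi_eq0 muln_eq0 (negbTE (lt0n_neq0 qX_gt0)) orbF.
by rewrite andbC; case: (u 0 (iw j) == 0); case: (u 0 (iy j) + u 0 (iw j) == 0).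
Qed.

Lemma U_inj : {in U &, injective (mulmx^~ G)}.
Proof.
move=> u u' uU u'U /= e; apply/eqP; rewrite -subr_eq0 -mulG_eq0 ?mulmxBl ?e ?subrr //.
by move: uU u'U; rewrite !inU linearB; apply: DeltaB.
Qed.

Lemma card_code_G : #|code G| = #|U|.
Proof. by rewrite code_G card_in_imset //; apply: U_inj. Qed.

Lemma rank_G : \rank G = (2 * m + #|C|)%N.
Proof.
apply/eqP; rewrite -(eqn_exp2l _ _ (card_finNzRing_gt1 F)).
by rewrite -card_code card_code_G card_U.
Qed.

Lemma card_code_wt (P : pred nat) :
  #|[set c in code G | (c != 0) && P (wt c)]| = #|[set u in U | (u != 0) && P (wt (u *m G))]|.
Proof.
have inj : {in [set u in U | (u != 0) && P (wt (u *m G))] &, injective (mulmx^~ G)}.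
  by move=> u u' /setIdP [uU _] /setIdP [u'U _]; apply: U_inj.
rewrite -(card_in_imset inj); apply: eq_card => c; rewrite code_G.
apply/setIdP/imsetP => [[/imsetP [u uU ->] cP] | [u /setIdP [uU Pu] ->]].
  by exists u => //; apply/setIdP; rewrite -(mulG_eq0 uU).
by split; [apply: imset_f | rewrite mulG_eq0].
Qed.

(** * The quaternary case *)

Section Quaternary.
Hypothesis hF : q = 4%N.
Local Notation X := (4 ^ #|Fr|)%N.

Lemma X_gt0 : (0 < X)%N.
Proof. by rewrite expn_gt0. Qed.

Lemma wt_generic_q4 u k : k \in Fr -> u 0 k != 0 -> (2 * wt (u *m G) = 3 * X)%N.
Proof. by move=> kFr uk; have := wt_generic kFr uk; rewrite hF /=; lia. Qed.

Lemma wt_U_cases u : u \in U -> u != 0 ->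
  [\/ wt (u *m G) = X, wt (u *m G) = (2 * X)%N | (2 * wt (u *m G) = 3 * X)%N].
Proof.
move=> uU u0; case: (U_cases uU) => [[k kFr uk] | eu].
  by apply: Or33; apply: wt_generic_q4 kFr uk.
move: u0; rewrite eu wt_phi phi_eq0 hF.
case: (u 0 (iw j) == 0); case: (_ + _ == 0) => //= _.
- by apply: Or31; rewrite mul1n.
- by apply: Or31; rewrite mul1n.
- by apply: Or32.
Qed.

Lemma card_wt_phi t : (0 < t < 3)%N ->
  #|[set u in U | (u != 0) && (wt (u *m G) == t * X)%N]| =
  #|[set p : F * F | ((p.1 != 0%R) + (p.2 != 0%R) == t)%N]|.
Proof.
move=> /andP [t0 t3]; rewrite -[in RHS](card_imset _ phi_inj); apply: eq_card => u.
apply/setIdP/imsetP => [[uU /andP [u0 /eqP wu]] | [[s b] sb ->]].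
  case: (U_cases uU) => [[k kFr uk] | eu].
    have := wt_generic_q4 kFr uk; rewrite wu; have := X_gt0.
    by move: t0 t3; case: (t) => [|[|[|]]] //=; lia.
  move: wu; rewrite eu wt_phi hF => /eqP; rewrite eqn_pmul2r ?X_gt0 // addnC => /eqP wt_t.
  by exists (u 0 (iy j) + u 0 (iw j), u 0 (iw j)); rewrite // inE wt_t.
move: sb; rewrite inE /= => /eqP st.
rewrite phi_U phi_eq0 wt_phi hF addnC st eqxx andbT; split=> //.
by apply: contraTN t0 => /andP [/eqP s0 /eqP b0]; rewrite -st s0 b0 eqxx.
Qed.

Lemma card_wt_generic :
  #|[set u in U | (u != 0) && (2 * wt (u *m G) == 3 * X)%N]| = (#|U| - 16)%N.
Proof.
pose Phi := [set phi p.1 p.2 | p in [set: F * F]].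
have card_Phi : #|Phi| = 16%N by rewrite card_imset ?cardsT ?card_prod ?hF //; apply: phi_inj.
have sPhi : Phi \subset U by apply/subsetP => _ /imsetP [p _ ->]; apply: phi_U.
rewrite -card_Phi -(setIidPr sPhi) -cardsD; apply: eq_card => u.
rewrite [RHS]in_setD andbC; apply/setIdP/andP => [[uU /andP [u0 /eqP wu]] | [uU uPhi]].
  split=> //; apply/imsetP => -[[s b] _ eu]; move: wu.
  by rewrite eu wt_phi hF; have := X_gt0; case: (b != 0); case: (s != 0) => /=; lia.
split=> //; case: (U_cases uU) => [[k kFr uk] | eu].
  by rewrite (wt_generic_q4 kFr uk) eqxx andbT; apply: contraNneq uk => ->; rewrite mxE.
by case/negP: uPhi; rewrite eu; apply/imsetP; exists (u 0 (iy j) + u 0 (iw j), u 0 (iw j)).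
Qed.

Lemma code_wt_cases c : c \in code G -> c != 0 ->
  [\/ wt c = X, wt c = (2 * X)%N | (2 * wt c = 3 * X)%N].
Proof. by rewrite code_G => /imsetP [u uU ->]; rewrite mulG_eq0 //; apply: wt_U_cases. Qed.

Lemma code_wt_min : exists2 c, c \in code G & (c != 0) && (wt c == X).
Proof.
exists (phi 1 0 *m G); first by rewrite code_G; apply: imset_f; apply: phi_U.
by rewrite mulG_eq0 ?phi_U // phi_eq0 wt_phi hF oner_eq0 eqxx /= mul1n eqxx.
Qed.

Lemma card_code_wt1 : #|[set c in code G | (c != 0) && (wt c == X)]| = 6%N.
Proof.
rewrite (card_code_wt (pred1 X)) -[X in pred1 X]mul1n card_wt_phi //.
by rewrite card_pairs_nz1 hF.
Qed.

Lemma card_code_wt2 : #|[set c in code G | (c != 0) && (wt c == 2 * X)%N]| = 9%N.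
Proof. by rewrite (card_code_wt (pred1 (2 * X)%N)) card_wt_phi // card_pairs_nz2 hF. Qed.

Lemma card_code_wt_generic Y : (2 * Y = 3 * X)%N ->
  #|[set c in code G | (c != 0) && (wt c == Y)]| = (4 ^ (2 * m + #|C|) - 16)%N.
Proof.
move=> eY; rewrite (card_code_wt (pred1 Y)); have := card_wt_generic; rewrite card_U hF => <-.
by apply: eq_card => u; rewrite !inE /= -eY eqn_pmul2l.
Qed.

End Quaternary.
End Code.
End ThreeWeightSystem.

Theorem mainTheorem13 (F : finFieldType) (hF : #|F| = 4%N)
  (m : nat) (hm : (2 <= m)%N) (A B C : {set 'I_m})
  (hA0 : A != set0) (hB0 : B != set0) (hC0 : C != set0)
  (hBA : B = A) (hAcard : #|A| = (m - 1)%N)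
  (Nbar : {set 'cV[F]_(m + (m + m))})
  (hNbar : proj_reps (@N2 F m A B C) Nbar) :
  let theta := (2 ^ (4 * m + 2 * #|C| - 3))%N in
  let G := colmx Nbar in
  let Cd := code G in
  projective Cd /\
  #|Nbar| = theta /\
  \rank G = (2 * m + #|C|)%N /\
  (forall c, c \in Cd -> c != 0 -> (theta %/ 2 <= wt c)%N) /\
  (exists2 c, c \in Cd & (c != 0) && (wt c == theta %/ 2)%N) /\
  (forall c, c \in Cd -> c != 0 ->
     wt c \in [:: theta %/ 2; 3 * theta %/ 4; theta]%N) /\
  #|[set c in Cd | (c != 0) && (wt c == theta %/ 2)%N]| = 6%N /\
  #|[set c in Cd | (c != 0) && (wt c == 3 * theta %/ 4)%N]| = (4 ^ (2 * m + #|C|) - 16)%N /\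
  #|[set c in Cd | (c != 0) && (wt c == theta)%N]| = 9%N /\
  (theta %/ 2 + 3 * theta %/ 4 + theta = 9 * theta %/ 4)%N.
Proof.
subst B; have [j Aj] : exists j, A = ~: [set j].
  have /cards1P [j Aj] : #|~: A| == 1%N by rewrite [#|~: A|]cardsCs setCK card_ord hAcard; lia.
  by exists j; rewrite -Aj setCK.
subst A; rewrite N2_eq in hNbar; move=> theta G Cd.
have C_gt0 : (0 < #|C|)%N by rewrite card_gt0.
have Fr_gt0 : (0 < #|Fr C j|)%N by rewrite card_Fr; lia.
have th : theta = (2 * 4 ^ #|Fr C j|)%N.
  by rewrite /theta -expn2_odd card_Fr; congr (2 ^ _)%N; lia.
have [th2 th34 th94] := double_pow4_divn Fr_gt0; rewrite -th in th2 th34 th94.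
have wt_cases := code_wt_cases hNbar hF.
split; first exact: projective_reps hNbar (S_neq0 _ _ _).
split; first by rewrite (card_Nbar hNbar) hF th.
split; first exact: rank_G hNbar.
split; first by move=> c cCd c0; rewrite th2; case: (wt_cases c cCd c0); lia.
split; first by rewrite th2; apply: code_wt_min.
split; first by move=> c cCd c0; rewrite !inE th2 th; case: (wt_cases c cCd c0); lia.
split; first by rewrite th2; apply: card_code_wt1.
split; first exact: card_code_wt_generic hNbar hF _ th34.
split; first by rewrite th; apply: card_code_wt2.
by rewrite th2 th94.
Qed.
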